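(* Let $C$ be a GHZ-preparation circuit on a set of qubits, built as follows: all qubits start in $\ket{0}$, a root qubit $v_0$ is put in the state $\ket{+}$ by a Hadamard gate, and then, layer by layer, CNOT gates are applied whose control is a qubit that has already been excited (entangled) and whose target is a qubit that has not yet been excited, so that every qubit is eventually excited and the ideal output is $\frac{1}{\sqrt 2}(\ket{0}^{\otimes n}+\ket{1}^{\otimes n})$. Suppose the gates and idle timesteps of $C$ form a rooted tree $T=(V,E)$ (the spacetime tree described in the context). For two qubits $i,j$, identified with the leaves of $T$ at the end of the circuit, define the edge set $$S_{i,j} := \mathrm{path}(i,\mathrm{lca}(i,j)) \cup \mathrm{path}(j,\mathrm{lca}(i,j)) \subseteq E,$$ where $\mathrm{lca}(i,j)$ is the lowest common ancestor of $i$ and $j$ in $T$ and $\mathrm{path}(a,b)$ is the set of edges of the unique path in $T$ from $a$ to $b$. Then a single-qubit $X$ or $Y$ error at a spacetime location $(q,t)$ of $C$ is detected by the measurement of $Z_iZ_j$ at the end of $C$ if and only if its corresponding edge in $T$ lies in $S_{i,j}$.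
   Context: Spacetime locations of $C$ are pairs $(q,t)$ with $q$ a qubit and $t$ a layer (timestep) of the circuit; errors are only considered at error-eligible locations, namely $(q,t)$ with $t\ge l_q$, where $l_q$ is the first layer in which qubit $q$ is excited (before that the qubit is in the ground state). The rooted tree $T$ has as root the root qubit at its excitation, its vertices are the excited spacetime locations, and its edges are the wire segments of a qubit between consecutive layers (idle timesteps or continuation through a gate) together with the CNOT links from control to newly excited target; each error-eligible spacetime location $(q,t)$ thus corresponds to an edge of $T$, and the final-time vertex of each qubit is a leaf. A single-qubit Pauli error $E$ at location $(q,t)$ is ''detected'' by the final measurement of $Z_iZ_j$ if it flips the outcome of that measurement relative to the error-free circuit (for the ideal GHZ state the outcome is $+1$), equivalently if $E$ anticommutes with the operator obtained by propagating $Z_iZ_j$ backwards through the circuit to that location. *)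

From mathcomp Require Import all_boot.
Set Implicit Arguments. Unset Strict Implicit. Unset Printing Implicit Defensive.

(* A GHZ-preparation circuit on qubits 'I_n is described by
   - r        : the root qubit (Hadamard at layer 0, so excited at layer 0),
   - tau q    : the layer l_q in which qubit q is excited
                (tau r = 0; for q <> r, the CNOT par q -> q is applied at layer tau q),
   - par q    : the control of the CNOT that excites q (q <> r).
   Layers 1..L are CNOT layers. Validity (as hypotheses of the theorem):
   the control is already excited, every qubit is excited by layer L, and
   within a layer the gates act on disjoint qubits. *)

Section Circuit.
Variables (n L : nat) (r : 'I_n) (par : 'I_n -> 'I_n) (tau : 'I_n -> nat).

Definition ghz_circuit : Prop :=
  [/\ tau r = 0,
      (forall q, q != r -> tau (par q) < tau q <= L) &
      (forall q q', q != r -> q' != r -> q != q' -> tau q = tau q' ->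
         par q != par q')].

(* Spacetime locations (q,t); vertex (q,t) of T is the location at the
   output of layer t. *)
Definition loc := ('I_n * nat)%type.

Definition vertex (v : loc) : Prop := tau v.1 <= v.2 <= L.

(* Parent in the spacetime tree T: wire segment (q,t-1)-(q,t) for t > l_q,
   CNOT link (par q, l_q - 1)-(q, l_q) at excitation; root (r,0) maps to itself. *)
Definition parent (v : loc) : loc :=
  let: (q, t) := v in
  if tau q < t then (q, t.-1)
  else if q == r then (q, t) else (par q, t.-1).

Definition anc (u v : loc) : Prop := exists k, iter k parent u = v.

Definition is_lca (a b w : loc) : Prop :=
  [/\ anc a w, anc b w & forall w', anc a w' -> anc b w' -> anc w w'].

(* Edges of T, each written as (child, parent). *)
Definition edge := (loc * loc)%type.

Definition tree_edge (e : edge) : Prop :=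
  vertex e.1 /\ e.1 <> (r, 0) /\ e.2 = parent e.1.

Definition path_up (a b : loc) (e : edge) : Prop :=
  exists v, [/\ e = (v, parent v), anc a v, anc v b & v <> b].

Definition S_set (i j : 'I_n) (e : edge) : Prop :=
  exists w, is_lca (i, L) (j, L) w /\
            (path_up (i, L) w e \/ path_up (j, L) w e).

Definition corr_edge (v : loc) : edge := (v, parent v).

(* Pauli operators up to phase, in symplectic form (x-part, z-part). *)
Definition pauli := (('I_n -> bool) * ('I_n -> bool))%type.

(* Conjugation by the CNOT layer t (CNOT c->t: x_t += x_c, z_c += z_t). *)
Definition layer_conj (t : nat) (P : pauli) : pauli :=
  (fun a => P.1 a (+) [&& a != r, tau a == t & P.1 (par a)],
   fun a => P.2 a (+) \big[addb/false]_(b | [&& b != r, tau b == t & par b == a]) P.2 b).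

Definition ZZ (i j : 'I_n) : pauli :=
  (fun _ => false, fun a => (a == i) (+) (a == j)).

(* back d P : P (given after layer L) propagated backwards to after layer L - d. *)
Fixpoint back (d : nat) (P : pauli) : pauli :=
  match d with
  | 0 => P
  | d'.+1 => layer_conj (L - d') (back d' P)
  end.

(* An error X (y = false) or Y (y = true) at location (q,t) is detected by the
   final Z_i Z_j measurement iff it anticommutes with Z_i Z_j propagated back
   to the output of layer t. *)
Definition detected (i j q : 'I_n) (t : nat) (y : bool) : bool :=
  let P := back (L - t) (ZZ i j) in P.2 q (+) (y && P.1 q).

End Circuit.

From Pilot Require Import Defs.
From mathcomp Require Import all_boot zify.
Set Implicit Arguments. Unset Strict Implicit. Unset Printing Implicit Defensive.

(* Propagating Z_x backwards through a CNOT layer copies Z from each target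
   onto its control and never creates an X component.  Hence Z_x, pulled back
   to the output of layer s, is the product of Z over the qubits met along the
   tree path from the leaf (x, L) down to layer s.  A qubit q excited by
   layer t can occur on that path at or above layer t only as a single wire
   segment reaching down to (q, t), so an X or Y error at (q, t) anticommutes
   with the pulled-back Z_i Z_j exactly when (q, t) is an ancestor of one of
   the leaves i, j but not of the other; in a tree this says that the edge
   above (q, t) lies on the path from i or from j up to their lowest common
   ancestor. *)

Lemma big_addb_single (I : finType) (Q : pred I) (F : I -> bool) c :
  (forall b, Q b -> F b -> b = c) ->
  \big[addb/false]_(b | Q b) F b = Q c && F c.
Proof.
move=> Fc; case Qc: (Q c) => /=.
  rewrite (bigD1 c) //= big1 ?addbF // => b /andP[Qb /negbTE bc].
  by apply/negbTE/negP => /(Fc _ Qb) /eqP; rewrite bc.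
by rewrite big1 // => b Qb; apply/negbTE/negP => /(Fc _ Qb) bc; rewrite -bc Qb in Qc.
Qed.

Section SpacetimeTree.
Variables (n L : nat) (r : 'I_n) (par : 'I_n -> 'I_n) (tau : 'I_n -> nat).
Hypothesis Hc : ghz_circuit L r par tau.

Local Notation parent := (parent r par tau).
Local Notation anc := (anc r par tau).
Local Notation is_lca := (is_lca r par tau).
Local Notation path_up := (path_up r par tau).

Lemma tau_root : tau r = 0.
Proof. by case: Hc. Qed.

Lemma tau_par q : q != r -> tau (par q) < tau q.
Proof. by case: Hc => _ H _ /H /andP[]. Qed.

Lemma tau_leL q : tau q <= L.
Proof.
case: (q =P r) => [->|/eqP qr]; first by rewrite tau_root.
by case: Hc => _ /(_ q qr) /andP[].
Qed.

Lemma excited_at0 (v : loc n) : tau v.1 <= v.2 -> v.2 = 0 -> v = (r, 0).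
Proof.
case: v => q s /= + s0; rewrite s0 leqn0 => /eqP tq.
by case: (q =P r) => [-> //|/eqP /tau_par]; rewrite tq.
Qed.

Lemma iter_parent_root k : iter k parent (r, 0) = (r, 0).
Proof. by elim: k => //= k ->; rewrite /Defs.parent ltn0 eqxx. Qed.

Lemma parent_excited (v : loc n) : tau v.1 <= v.2 ->
  (parent v).2 = v.2.-1 /\ tau (parent v).1 <= (parent v).2.
Proof.
case: v => q s /= hs; rewrite /Defs.parent.
case: ltnP => hlt /=; first by split => //; lia.
case: eqP => [qr|/eqP qr] /=; first by rewrite qr tau_root in hs hlt *; lia.
by split => //; have := tau_par qr; lia.
Qed.

Lemma iter_parent_excited (v : loc n) k : tau v.1 <= v.2 ->
  (iter k parent v).2 = v.2 - k /\ tau (iter k parent v).1 <= (iter k parent v).2.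
Proof.
move=> hv; elim: k => [|k [IHt IHe]] /=; first by rewrite subn0.
by have [-> ?] := parent_excited IHe; split => //; rewrite IHt; lia.
Qed.

Lemma iter_parent_wire q u k : tau q + k <= u -> iter k parent (q, u) = (q, u - k).
Proof.
elim: k => [|k IH] hk /=; first by rewrite subn0.
by rewrite IH; last lia; rewrite /Defs.parent ifT; [congr pair; lia | lia].
Qed.

Lemma anc_trans u v w : anc u v -> anc v w -> anc u w.
Proof. by case=> k1 <- [k2 <-]; exists (k2 + k1); rewrite iterD. Qed.

Lemma anc_total a v w : anc a v -> anc a w -> anc v w \/ anc w v.
Proof.
case=> k1 <- [k2 <-]; case: (leqP k1 k2) => hk.
  by left; exists (k2 - k1); rewrite -iterD subnK.
by right; exists (k1 - k2); rewrite -iterD subnK // ltnW.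
Qed.

Lemma anc_antisym (u w : loc n) : tau u.1 <= u.2 -> u <> (r, 0) ->
  anc u w -> anc w u -> u = w.
Proof.
move=> hu ur [k1 e1] [k2 e2].
have [hk _] := iter_parent_excited (k2 + k1) hu; rewrite iterD e1 e2 in hk.
have [u0|upos] := posnP u.2; first by case: ur; apply: excited_at0.
by rewrite -e1 (_ : k1 = 0) //; lia.
Qed.

Lemma is_lca_sym a b w : is_lca a b w -> is_lca b a w.
Proof. by case=> aw bw lca; split => // w' bw' aw'; apply: lca. Qed.

Lemma path_up_lca a b w (v : loc n) : is_lca a b w ->
  tau v.1 <= v.2 -> v <> (r, 0) ->
  path_up a w (v, parent v) <-> anc a v /\ ~ anc b v.
Proof.
case=> aw bw lca hv vr; split.
  case=> _ [[<- _] av vw nvw]; split => // bv.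
  by apply: nvw; apply: anc_antisym => //; apply: lca.
case=> av nbv; exists v; split => //.
  by case: (anc_total av aw) => // wv; case: nbv; apply: anc_trans wv.
by move=> vw; apply: nbv; rewrite vw.
Qed.

Definition leaf_anc (x : 'I_n) (s : nat) : loc n := iter (L - s) parent (x, L).

Lemma leaf_anc_top x : leaf_anc x L = (x, L).
Proof. by rewrite /leaf_anc subnn. Qed.

Lemma leaf_anc_excited x s : s <= L ->
  (leaf_anc x s).2 = s /\ tau (leaf_anc x s).1 <= s.
Proof.
move=> hs; rewrite /leaf_anc.
have [-> he] := iter_parent_excited (L - s) (tau_leL x : tau (x, L).1 <= L).
by move: he => /=; rewrite subKn //; split.
Qed.

Lemma leaf_ancE x s : s <= L -> leaf_anc x s = ((leaf_anc x s).1, s).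
Proof. by move=> /(leaf_anc_excited x) [+ _]; case: (leaf_anc x s) => ? ? /= ->. Qed.

Lemma leaf_anc0 x : leaf_anc x 0 = (r, 0).
Proof. by have [e ?] := leaf_anc_excited x (leq0n L); apply: excited_at0; rewrite e. Qed.

Lemma leaf_anc_iter x s u : s <= u <= L ->
  leaf_anc x s = iter (u - s) parent (leaf_anc x u).
Proof. by case/andP=> su uL; rewrite /leaf_anc -iterD; congr iter; lia. Qed.

Lemma leaf_anc_pred x s : 0 < s <= L -> leaf_anc x s.-1 = parent (leaf_anc x s).
Proof.
move=> hs; rewrite (@leaf_anc_iter x s.-1 s); last lia.
by rewrite (_ : s - s.-1 = 1) //; lia.
Qed.

Lemma leaf_anc_wire x s u : s <= u <= L -> tau (leaf_anc x u).1 <= s ->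
  (leaf_anc x s).1 = (leaf_anc x u).1.
Proof.
move=> hsu hq; have uL : u <= L by case/andP: hsu.
by rewrite (leaf_anc_iter x hsu) (leaf_ancE x uL) iter_parent_wire //; lia.
Qed.

Lemma anc_leafP x (v : loc n) : anc (x, L) v <-> exists2 s, s <= L & v = leaf_anc x s.
Proof.
split=> [[k <-]|[s _ ->]]; last by exists (L - s).
case: (leqP k L) => hk.
  by exists (L - k); [lia | rewrite /leaf_anc; congr iter; lia].
exists 0 => //; rewrite leaf_anc0 -(subnK (ltnW hk)) iterD.
have -> : iter L parent (x, L) = leaf_anc x 0 by rewrite /leaf_anc subn0.
by rewrite leaf_anc0 iter_parent_root.
Qed.

Lemma anc_leaf_wireP x q t : t <= L ->
  reflect (anc (x, L) (q, t)) ((leaf_anc x t).1 == q).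
Proof.
move=> tL; apply: (iffP eqP) => [<-|/anc_leafP [s sL e]].
  by apply/anc_leafP; exists t => //; rewrite -leaf_ancE.
have [ts _] := leaf_anc_excited x sL.
by rewrite -e /= in ts; rewrite -ts in e; rewrite -e.
Qed.

Lemma lca_leaves_exists i j : exists w, is_lca (i, L) (j, L) w.
Proof.
pose Q s := (s <= L) && (leaf_anc i s == leaf_anc j s).
have Q0 : exists s, Q s by exists 0; rewrite /Q !leaf_anc0 eqxx.
have QL s : Q s -> s <= L by case/andP.
have [m /andP[mL /eqP eij] maxm] := ex_maxnP Q0 QL.
exists (leaf_anc i m); split; try by apply/anc_leafP; exists m.
move=> w /anc_leafP [u uL ->] /anc_leafP [u' u'L e].
have u'u : u' = u.
  have [<- _] := leaf_anc_excited i uL.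
  by have [<- _] := leaf_anc_excited j u'L; rewrite e.
rewrite u'u in e.
have um : u <= m by apply: maxm; rewrite /Q uL e eqxx.
by exists (m - u); rewrite -leaf_anc_iter ?um.
Qed.

Lemma S_set_anc i j (v : loc n) : tau v.1 <= v.2 -> v <> (r, 0) ->
  S_set L r par tau i j (v, parent v) <->
  (anc (i, L) v /\ ~ anc (j, L) v) \/ (anc (j, L) v /\ ~ anc (i, L) v).
Proof.
move=> hv vr; split.
  case=> w [lw [/(path_up_lca lw hv vr)|/(path_up_lca (is_lca_sym lw) hv vr)]];
  by [left | right].
have [w lw] := lca_leaves_exists i j.
by case=> [/(path_up_lca lw hv vr)|/(path_up_lca (is_lca_sym lw) hv vr)] pv;
  exists w; split; [| left | | right].
Qed.

(* The Z support of Z_x propagated back to the output of layer s: the qubits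
   on the tree path from the leaf (x, L) down to layer s. *)
Definition zsupp (x : 'I_n) (s : nat) (q : 'I_n) : bool :=
  [exists u : 'I_L.+1, (s <= u) && ((leaf_anc x u).1 == q)].

Lemma zsupp_top x q : zsupp x L q = (x == q).
Proof.
apply/existsP/idP => [[u /andP[Lu /eqP <-]]|/eqP <-].
  have -> : nat_of_ord u = L by have := ltn_ord u; lia.
  by rewrite leaf_anc_top.
by exists ord_max; rewrite /= leqnn leaf_anc_top eqxx.
Qed.

Lemma zsupp_excited x s q : tau q <= s <= L -> zsupp x s q = ((leaf_anc x s).1 == q).
Proof.
case/andP=> qs sL; apply/existsP/idP => [[u /andP[su /eqP uq]]|/eqP sq].
  apply/eqP; rewrite -uq (@leaf_anc_wire x s u) ?uq //.
  by rewrite su -ltnS ltn_ord.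
by exists (inord s); rewrite inordK ?leqnn ?sq ?eqxx //; lia.
Qed.

Lemma zsupp_pred x s q : 0 < s <= L ->
  zsupp x s.-1 q = zsupp x s q || ((leaf_anc x s.-1).1 == q).
Proof.
move=> hs; apply/existsP/orP => [[u /andP[su uq]]|[/existsP [u /andP[su uq]]|sq]].
- case: (ltnP s.-1 u) => hu; first by left; apply/existsP; exists u; rewrite uq; lia.
  by right; have <- : nat_of_ord u = s.-1 by lia.
- by exists u; rewrite uq; lia.
- by exists (inord s.-1); rewrite inordK ?leqnn ?sq //; lia.
Qed.

Lemma zsupp_layer x s q : 0 < s <= L ->
  zsupp x s.-1 q =
  zsupp x s q (+) \big[addb/false]_(b | [&& b != r, tau b == s & par b == q]) zsupp x s b.
Proof.
move=> hs; have sL : s <= L by case/andP: hs.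
have [ts tc] := leaf_anc_excited x sL; set c := (leaf_anc x s).1 in tc *.
rewrite (big_addb_single (c := c)); last first.
  by move=> b /and3P[_ /eqP tb _]; rewrite zsupp_excited ?tb ?leqnn ?sL // => /eqP.
have zc : zsupp x s c by rewrite zsupp_excited ?tc ?sL.
rewrite zc andbT zsupp_pred // leaf_anc_pred //.
rewrite (leaf_ancE x sL) -/c /Defs.parent.
case: ltnP => [cs|sc] /=.
  rewrite (_ : tau c == s = false) ?andbF ?addbF; last by apply/negbTE; lia.
  by case: eqP => [<-|]; rewrite ?orbF // zsupp_excited ?eqxx //; lia.
have cr : c != r by apply/eqP => cr; move: tc sc; rewrite cr tau_root; lia.
have tcs : tau c = s by lia.
rewrite (negbTE cr) tcs eqxx /=.
case: eqP => [<-|_]; rewrite ?orbF ?addbF // orbT.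
have tp := tau_par cr; rewrite zsupp_excited; last lia.
by case: eqP => // cp; move: tp; rewrite -cp ltnn.
Qed.

Lemma back_ZZ_X i j d a : (back L r par tau d (ZZ i j)).1 a = false.
Proof. by elim: d a => [|d IH] a //=; rewrite !IH !andbF. Qed.

Lemma back_ZZ_Z i j d a : d <= L ->
  (back L r par tau d (ZZ i j)).2 a = zsupp i (L - d) a (+) zsupp j (L - d) a.
Proof.
elim: d a => [|d IH] a hd /=.
  by rewrite subn0 !zsupp_top [i == a]eq_sym [j == a]eq_sym.
have {}IH b := IH b (ltnW hd).
rewrite /layer_conj /= IH; under eq_bigr => b _ do rewrite IH.
rewrite big_split /= (_ : L - d.+1 = (L - d).-1); last lia.
by rewrite !zsupp_layer; [rewrite addbACA | lia | lia].
Qed.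

Lemma detectedE i j q t y : tau q <= t <= L ->
  detected L r par tau i j q t y = ((leaf_anc i t).1 == q) (+) ((leaf_anc j t).1 == q).
Proof.
move=> ht; rewrite /detected back_ZZ_X andbF addbF back_ZZ_Z ?leq_subr //.
by rewrite subKn ?(zsupp_excited _ ht) //; case/andP: ht.
Qed.

Lemma S_setE i j q t : tau q <= t <= L -> (q, t) <> (r, 0) ->
  S_set L r par tau i j (corr_edge r par tau (q, t)) <->
  ((leaf_anc i t).1 == q) (+) ((leaf_anc j t).1 == q).
Proof.
move=> ht qr; have tL : t <= L by case/andP: ht.
have qt : tau (q, t).1 <= (q, t).2 by case/andP: ht.
rewrite /corr_edge S_set_anc //.
by case: (anc_leaf_wireP i q tL) => hi; case: (anc_leaf_wireP j q tL) => hj /=;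
  intuition.
Qed.

End SpacetimeTree.

Theorem lemma1 (n L : nat) (r : 'I_n) (par : 'I_n -> 'I_n) (tau : 'I_n -> nat)
  (Hc : ghz_circuit L r par tau)
  (i j q : 'I_n) (t : nat) (y : bool)
  (Ht : tau q <= t <= L) :
  detected L r par tau i j q t y <->
  ((q, t) <> (r, 0) /\ S_set L r par tau i j (corr_edge r par tau (q, t))).
Proof.
rewrite (detectedE Hc) //.
case: (eqVneq (q, t) (r, 0)) => [[-> ->]|/eqP qr].
  by rewrite !(leaf_anc0 Hc) eqxx; split=> // [[]].
by rewrite -(S_setE Hc i j Ht qr); intuition.
Qed.
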